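(* Let $d \geq 1$ and let $X \subset S^{\mathbb{Z}^d}$ be a countable subshift. Then there is no sequence $(x^i)_{i \in \mathbb{N}}$ of points of $X$ with $x^i \succ x^{i-1}$ for all $i \geq 1$.
   Context: A $d$-dimensional subshift is a closed subset of $S^{\mathbb{Z}^d}$ ($S$ finite, product topology) invariant under all coordinate shifts. For configurations $x,y$, $x \succcurlyeq y$ means every finite pattern occurring in $y$ also occurs in $x$ (the subpattern preorder); $x \approx y$ means $x \succcurlyeq y$ and $y \succcurlyeq x$; $x \succ y$ means $x \succcurlyeq y$ and $x \not\approx y$. *)

From HB Require Import structures.
From mathcomp Require Import all_boot all_order all_algebra.
Set Implicit Arguments. Unset Strict Implicit. Unset Printing Implicit Defensive.
Import GRing.Theory.
Local Open Scope ring_scope.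

Definition pos (d : nat) := {ffun 'I_d -> int}.

Definition config (d : nat) (S : finType) := pos d -> S.

Definition shift d S (v : pos d) (x : config d S) : config d S :=
  fun u => x (u + v).

Definition occurs_in d S (x y : config d S) (F : seq (pos d)) (v : pos d) :=
  exists w : pos d, forall u, u \in F -> x (u + w) = y (u + v).

Definition subpat_ge d S (x y : config d S) : Prop :=
  forall (F : seq (pos d)) (v : pos d), occurs_in x y F v.

Definition subpat_equiv d S (x y : config d S) : Prop :=
  subpat_ge x y /\ subpat_ge y x.

Definition subpat_gt d S (x y : config d S) : Prop :=
  subpat_ge x y /\ ~ subpat_equiv x y.

(* Closed in the product topology: the cylinder sets [x|_F] (F finite)
   form a base, so X is closed iff every x all of whose cylinders meet X
   lies in X. *)
Definition closed_set d S (X : config d S -> Prop) : Prop :=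
  forall x : config d S,
    (forall F : seq (pos d), exists2 y, X y & forall u, u \in F -> y u = x u) ->
    X x.

Definition shift_invariant d S (X : config d S -> Prop) : Prop :=
  forall (v : pos d) (x : config d S), X x -> X (shift v x).

Definition subshift d S (X : config d S -> Prop) : Prop :=
  closed_set X /\ shift_invariant X.

Definition countable_set T (X : T -> Prop) : Prop :=
  exists g : T -> nat, forall x y, X x -> X y -> g x = g y -> x = y.

From mathcomp Require Import all_boot all_order all_algebra.
From Stdlib Require Import Classical FunctionalExtensionality IndefiniteDescription.

(* Let x_0 < x_1 < ... be such a chain in the countable
   subshift X, and let A be the set of points of X all of whose finite
   patterns occur in some x_i.  A is closed and countable, hence (Baire
   category theorem for the Cantor-like space S^(Z^d)) it has an isolated
   point y: some finite window F of y determines y inside A.  The pattern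
   y|F occurs in some x_i; then for every j with x_j >= x_i, the pattern
   also occurs in x_j, and the corresponding shift of x_j lies in A and
   agrees with y on F, so it equals y.  Hence x_i and x_{i+1} are both
   shifts of y and therefore subpattern-equivalent, contradicting
   x_{i+1} > x_i. *)

Section CylinderTopology.
Context {P : countType} {S : Type}.
Implicit Types (y z : P -> S) (F G : seq P) (A : (P -> S) -> Prop).

Definition agree F y z := forall u, u \in F -> y u = z u.

(* Closedness for the product topology: cylinders form a base. *)
Definition closed_in A :=
  forall z, (forall F, exists2 y, A y & agree F y z) -> A z.

Definition isolated_in A y :=
  A y /\ exists F, forall z, A z -> agree F z y -> z = y.

Lemma agree_sub F G y z : {subset F <= G} -> agree G y z -> agree F y z.
Proof. by move=> sFG yz u /sFG; apply: yz. Qed.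

Section RefiningSequence.
Variables (y : nat -> P -> S) (F : nat -> seq P).
Hypothesis F_mono : forall n, {subset F n <= F n.+1}.
Hypothesis y_agree : forall n, agree (F n) (y n.+1) (y n).
Hypothesis F_cover : forall p, exists n, p \in F n.

Lemma refining_chain m k :
  m <= k -> {subset F m <= F k} /\ agree (F m) (y k) (y m).
Proof.
elim: k => [|k IHk]; first by rewrite leqn0 => /eqP ->; split=> u.
rewrite leq_eqVlt => /orP [/eqP ->|]; first by split=> u.
rewrite ltnS => /IHk [sFmk agree_mk].
split=> u uFm; first by apply/F_mono/sFmk.
by rewrite y_agree ?agree_mk //; apply: sFmk.
Qed.

Lemma refining_window G : exists n, {subset G <= F n}.
Proof.
elim: G => [|p G [m sGm]]; first by exists 0.
have [k pFk] := F_cover p.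
exists (maxn m k) => u; rewrite inE => /orP [/eqP ->|/sGm uFm].
  by have [sub _] := refining_chain _ _ (leq_maxr m k); apply: sub.
by have [sub _] := refining_chain _ _ (leq_maxl m k); apply: sub.
Qed.

Definition refining_limit p := y (xchoose (F_cover p)) p.

Lemma refining_limit_agree n : agree (F n) refining_limit (y n).
Proof.
move=> u uFn; rewrite /refining_limit; set k := xchoose _.
have uFk : u \in F k := xchooseP (F_cover u).
case: (leqP n k) => [le_nk|/ltnW le_kn].
  by have [_ ->] := refining_chain _ _ le_nk.
by have [_ ->] := refining_chain _ _ le_kn.
Qed.

Lemma refining_limit_closed A :
  closed_in A -> (forall n, A (y n)) -> A refining_limit.
Proof.
move=> A_closed Ay; apply: A_closed => G.
have [n sGn] := refining_window G.
exists (y n) => //; apply: agree_sub sGn _ => u uFn.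
by rewrite (refining_limit_agree _ _ uFn).
Qed.

End RefiningSequence.

(* We build a refining sequence whose n-th window excludes every
   point of A with code n, and whose limit lies in A. *)
Section NoPerfectCountableClosed.
Variables (A : (P -> S) -> Prop) (g : (P -> S) -> nat).
Hypothesis A_closed : closed_in A.
Hypothesis g_inj : forall y z, A y -> A z -> g y = g z -> y = z.
Hypothesis no_isolated : forall y, ~ isolated_in A y.

Lemma perfect_split y F : A y -> exists z, [/\ A z, agree F z y & z <> y].
Proof.
move=> Ay; apply: NNPP => no_z; apply: (no_isolated y); split=> //.
exists F => z Az zy; apply: NNPP => ne_zy; apply: no_z; by exists z.
Qed.

Lemma avoid_code y F n : A y ->
  exists y' G, [/\ A y', agree F y' y, {subset F <= G} &
                   forall w, A w -> agree G w y' -> g w <> n].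
Proof.
move=> Ay.
have [y' [Ay' y'y gy'n]] :
    exists y', [/\ A y', agree F y' y & g y' <> n].
  have [z [Az zy ne_zy]] := perfect_split y F Ay.
  case: (eqVneq (g y) n) => [gyn|/eqP gyn]; last by exists y; split=> // u.
  exists z; split=> // gzn; apply: ne_zy; apply: g_inj => //; congruence.
case: (classic (exists b, A b /\ g b = n)) => [[b [Ab gbn]]|no_b].
  have [p ne_p] : exists p, b p <> y' p.
    apply: NNPP => all_eq; apply: gy'n; rewrite -gbn; congr g.
    symmetry; apply: functional_extensionality => p.
    by apply: NNPP => ne; apply: all_eq; exists p.
  exists y', (p :: F); split=> // [u uF|w Aw wy' gwn].
    by rewrite inE uF orbT.
  have eq_bw : b = w by apply: g_inj => //; congruence.
  by apply: ne_p; rewrite eq_bw wy' // inE eqxx.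
exists y', F; split=> // w Aw _ gwn; apply: no_b; by exists w.
Qed.

(* Stage n of the construction: s' refines s, its window contains the point
   of code n (so that the windows exhaust P), and no point of A that agrees
   with s'.1 on this window has g-value n. *)
Definition refines n (s s' : (P -> S) * seq P) :=
  [/\ A s'.1, agree s.2 s'.1 s.1, {subset s.2 <= s'.2},
      (forall p, pickle p = n -> p \in s'.2) &
      forall w, A w -> agree s'.2 w s'.1 -> g w <> n].

Lemma refine_step n s : exists s', A s.1 -> refines n s s'.
Proof.
case: (classic (A s.1)) => [As|]; last by exists s.
have [y' [G [Ay' y's sG avoid]]] := avoid_code s.1 s.2 n As.
exists (y', G ++ seq_of_opt (unpickle n)) => _; split=> //=.
- by move=> u uF; rewrite mem_cat sG.
- by move=> p <-; rewrite mem_cat pickleK inE eqxx orbT.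
- by move=> w Aw wy'; apply: avoid => // u uG; apply: wy'; rewrite mem_cat uG.
Qed.

Lemma no_perfect_countable_closed a : ~ A a.
Proof.
move=> Aa.
pose next n s := proj1_sig (constructive_indefinite_description _ (refine_step n s)).
have nextP n s : A s.1 -> refines n s (next n s).
  exact: proj2_sig (constructive_indefinite_description _ (refine_step n s)).
pose st := fix st n := if n is m.+1 then next m (st m) else (a, [::]).
have A_st n : A (st n).1.
  by elim: n => [|n IHn] //; have [] := nextP n _ IHn.
have st_refines n : refines n (st n) (st n.+1) by exact: nextP (A_st n).
have F_mono n : {subset (st n).2 <= (st n.+1).2} by case: (st_refines n).
have y_agree n : agree (st n).2 (st n.+1).1 (st n).1 by case: (st_refines n).
have F_cover p : exists n, p \in (st n).2.
  by exists (pickle p).+1; case: (st_refines (pickle p)) => _ _ _ -> .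
set z := refining_limit (fun n => (st n).1) (fun n => (st n).2) F_cover.
have Az : A z by apply: refining_limit_closed.
have [_ _ _ _ avoid] := st_refines (g z).
by apply: (avoid z Az) => //; apply: refining_limit_agree.
Qed.

End NoPerfectCountableClosed.

Lemma countable_closed_isolated {A} {g : (P -> S) -> nat} {a} :
  closed_in A -> (forall y z, A y -> A z -> g y = g z -> y = z) -> A a ->
  exists y, isolated_in A y.
Proof.
move=> A_closed g_inj Aa; apply: NNPP => no_iso.
apply: (no_perfect_countable_closed _ _ A_closed g_inj _ _ Aa) => y iso_y.
by apply: no_iso; exists y.
Qed.

End CylinderTopology.

Import GRing.Theory.
Local Open Scope ring_scope.

Section SubpatternPreorder.
Context {d : nat} {S : finType}.
Implicit Types x y z : config d S.

Lemma subpat_ge_refl x : subpat_ge x x.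
Proof. by move=> F v; exists v. Qed.

Lemma subpat_ge_trans x y z : subpat_ge x y -> subpat_ge y z -> subpat_ge x z.
Proof.
move=> xy yz F v; have [w zy] := yz F v; have [w' yx] := xy F w.
by exists w' => u uF; rewrite yx // zy.
Qed.

Lemma shift_subpat_equiv v x : subpat_equiv (shift v x) x.
Proof.
split=> F u.
  by exists (u - v) => u' _; rewrite /shift -addrA subrK.
by exists (u + v) => u' _; rewrite /shift addrA.
Qed.

Lemma subpat_equiv_of_shifts a b x y :
  shift a x = shift b y -> subpat_equiv x y.
Proof.
move=> eq_shifts.
have [ax xa] := shift_subpat_equiv a x; have [by_ yb] := shift_subpat_equiv b y.
rewrite eq_shifts in ax xa.
by split; [apply: subpat_ge_trans xa by_ | apply: subpat_ge_trans yb ax].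
Qed.

End SubpatternPreorder.

Section ChainClosure.
Context {d : nat} {S : finType}.
Variables (X : config d S -> Prop) (x : nat -> config d S).
Hypothesis X_inv : shift_invariant X.
Hypothesis Xx : forall i, X (x i).

Definition chain_closure (y : config d S) :=
  X y /\ forall F : seq (pos d),
    exists i w, forall u, u \in F -> y u = x i (u + w).

Lemma chain_closure_closed : closed_set X -> closed_in chain_closure.
Proof.
move=> X_closed y near_y; split.
  by apply: X_closed => F; have [z [Xz _] zy] := near_y F; exists z.
move=> F; have [z [_ z_pat] zy] := near_y F; have [i [w zx]] := z_pat F.
by exists i, w => u uF; rewrite -zy // zx.
Qed.

Lemma chain_closure_shift i w : chain_closure (shift w (x i)).
Proof. by split=> [|F]; [apply: X_inv | exists i, w]. Qed.

(* If y is isolated in the chain closure, with isolating window F, and the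
   pattern y|F occurs in x i, then every x j containing the patterns of x i
   is a shift of y. *)
Lemma isolated_chain_closure y : isolated_in chain_closure y ->
  exists i, forall j, subpat_ge (x j) (x i) -> exists a, shift a (x j) = y.
Proof.
move=> [[_ y_pat] [F y_iso]]; have [i [w yx]] := y_pat F.
exists i => j ge_ji; have [a xji] := ge_ji F w.
exists a; apply: y_iso; first exact: chain_closure_shift.
by move=> u uF; rewrite /shift xji // yx.
Qed.

End ChainClosure.

Theorem proposition13 (d : nat) (S : finType) (X : config d S -> Prop) :
  (1 <= d)%N -> subshift X -> countable_set X ->
  ~ exists x : nat -> config d S,
      (forall i, X (x i)) /\ (forall i, subpat_gt (x i.+1) (x i)).
Proof.
move=> _ [X_closed X_inv] [g g_inj] [x [Xx chain]].
have closure_inj y z : chain_closure X x y -> chain_closure X x z ->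
    g y = g z -> y = z.
  by move=> [Xy _] [Xz _]; apply: g_inj.
have [y iso_y] := countable_closed_isolated (chain_closure_closed X x X_closed)
  closure_inj (chain_closure_shift X x X_inv Xx 0 0).
have [i shift_to_y] := isolated_chain_closure X x X_inv Xx y iso_y.
have [a xi_y] := shift_to_y i (subpat_ge_refl (x i)).
have [b xi1_y] := shift_to_y i.+1 (proj1 (chain i)).
apply: (proj2 (chain i)).
exact: subpat_equiv_of_shifts (etrans xi1_y (esym xi_y)).
Qed.
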